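(* Let $n\ge 1$ and let $\mathcal{C}$ be an $n$-qubit quantum channel (CPTP map) with entanglement fidelity $F(\mathcal{C})\neq 0$. Let $\mathcal{E}=\{(p_i,U_i)\}_{i=0}^{K-1}$ be an ensemble of $n$-qubit unitaries such that $\mathbb{E}_{\mathcal{E}}(\mathcal{C})=\mathcal{D}_{F(\mathcal{C})}$. Let $\mathcal{V}=\{((2^n+1)^{-1},V_j^\dagger)\}_{j=0}^{2^n}$ and $\mathcal{M}$ be as in the context. Then the $n$-qubit identity channel admits the quasiprobability decomposition $$\mathcal{I}^{\otimes n}=\frac{1}{F(\mathcal{C})}\,\mathbb{E}_{\mathcal{E}}(\mathcal{C})-\left(\frac{1}{F(\mathcal{C})}-1\right)\mathbb{E}_{\mathcal{V}}(\mathcal{M}).$$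
   Context: Entanglement fidelity: $F(\mathcal{C})=\langle\Phi_n|(\mathcal{I}^{\otimes n}\otimes\mathcal{C})(|\Phi_n\rangle\langle\Phi_n|)|\Phi_n\rangle$ with $|\Phi_n\rangle=2^{-n/2}\sum_{\vec k\in\{0,1\}^n}|\vec k\rangle|\vec k\rangle$. Pauli operators: for $\vec a\in\{0,1\}^n$, $X_{\vec a}=\bigotimes_i X^{a_i}$, $Z_{\vec a}=\bigotimes_i Z^{a_i}$; $\mathcal{Q}_n=\{X_{\vec x}Z_{\vec z}\}$ is the Pauli group modulo phases and $\mathcal{Q}_n^*=\mathcal{Q}_n\setminus\{I^{\otimes n}\}$. Depolarizing channel: $\mathcal{D}_p(\varphi)=p\varphi+\frac{1-p}{2^{2n}-1}\sum_{P\in\mathcal{Q}_n^*}P\varphi P$. For an ensemble $\mathcal{E}=\{(p_i,U_i)\}$, the twirl is $\mathbb{E}_{\mathcal{E}}(\mathcal{C})(\rho)=\sum_ip_iU_i^\dagger\mathcal{C}(U_i\rho U_i^\dagger)U_i$. The set $\mathcal{Q}_n^*$ is partitioned into $2^n+1$ maximally commuting subsets $S_0,\dots,S_{2^n}$ (each of $2^n-1$ pairwise commuting operators), and $V_j$ is a unitary with $S_j=\{s_{j,\vec a}V_jZ_{\vec a}V_j^\dagger:\vec a\ne\vec 0\}$, $s_{j,\vec a}\in\{\pm1\}$. $\mathcal{V}$ is the uniform ensemble over $V_0^\dagger,\dots,V_{2^n}^\dagger$, so $\mathbb{E}_{\mathcal{V}}(\mathcal{M})(\rho)=\frac{1}{2^n+1}\sum_jV_j\mathcal{M}(V_j^\dagger\rho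 V_j)V_j^\dagger$. $\mathcal{M}(\rho)=\sum_{\vec k}\operatorname{tr}[|\vec k\rangle\langle\vec k|\rho]\rho_{\vec k}$ with $\rho_{\vec k}=\frac{1}{2^n-1}\sum_{\vec l\neq\vec k}|\vec l\rangle\langle\vec l|$. *)

From HB Require Import structures.
From mathcomp Require Import all_boot all_order all_algebra.
Set Implicit Arguments. Unset Strict Implicit. Unset Printing Implicit Defensive.
Import Order.TTheory GRing.Theory Num.Theory.
Local Open Scope ring_scope.

Section Defs.
Variable C : numClosedFieldType.

Definition dag m p (A : 'M[C]_(m, p)) : 'M[C]_(p, m) := (map_mx Num.conj A)^T.

Definition unitary m (U : 'M[C]_m) : Prop := U *m dag U = 1%:M.

Definition psd m (A : 'M[C]_m) : Prop :=
  dag A = A /\ forall v : 'cV[C]_m, 0 <= (dag v *m A *m v) 0 0.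

(* bipartite index k of C^m (x) C^d  <->  pair (a, k') *)
Definition idx_pair m d (k : 'I_(m * d)) : 'I_m * 'I_d :=
  enum_val (cast_ord (esym (mxvec_cast m d)) k).

(* (I_m (x) Ch)(X): Ch applied blockwise (the linear extension of id (x) Ch) *)
Definition ext_id m d (Ch : 'M[C]_d -> 'M[C]_d) (X : 'M[C]_(m * d)) : 'M[C]_(m * d) :=
  \matrix_(i, j)
    (Ch (\matrix_(k, l) X (mxvec_index (idx_pair i).1 k) (mxvec_index (idx_pair j).1 l)))
      (idx_pair i).2 (idx_pair j).2.

Definition is_channel d (Ch : 'M[C]_d -> 'M[C]_d) : Prop :=
  [/\ linear Ch,
      (forall m (X : 'M[C]_(m * d)), psd X -> psd (ext_id Ch X))
    & (forall X, \tr (Ch X) = \tr X)].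

Definition Phi n : 'cV[C]_(2 ^ n * 2 ^ n) :=
  \col_i (if (idx_pair i).1 == (idx_pair i).2 then (sqrtC (2 ^ n)%:R)^-1 else 0).

Definition ent_fid n (Ch : 'M[C]_(2 ^ n) -> 'M[C]_(2 ^ n)) : C :=
  (dag (Phi n) *m ext_id Ch (Phi n *m dag (Phi n)) *m Phi n) 0 0.

Definition bit (k i : nat) : bool := odd (k %/ 2 ^ i).

(* X_a = (x)_i X^{a_i} : |k> |-> |k xor a> *)
Definition Xop n (a : 'I_(2 ^ n)) : 'M[C]_(2 ^ n) :=
  \matrix_(j, k) ([forall i : 'I_n, bit j i == (bit k i (+) bit a i)])%:R.

(* Z_z = (x)_i Z^{z_i} : |k> |-> (-1)^{z.k} |k> *)
Definition Zop n (z : 'I_(2 ^ n)) : 'M[C]_(2 ^ n) :=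
  \matrix_(j, k) ((j == k)%:R * (-1) ^+ (\sum_(i < n) (bit z i && bit k i))).

(* Pauli group modulo phases: indexed by (x, z), operator X_x Z_z *)
Definition pauli n (P : 'I_(2 ^ n) * 'I_(2 ^ n)) : 'M[C]_(2 ^ n) :=
  Xop P.1 *m Zop P.2.

Definition nonzero_idx n (a : 'I_(2 ^ n)) : bool := (a : nat) != 0%N.

Definition Qstar n : {set 'I_(2 ^ n) * 'I_(2 ^ n)} :=
  [set P | nonzero_idx P.1 || nonzero_idx P.2].

Definition depol n (p : C) (rho : 'M[C]_(2 ^ n)) : 'M[C]_(2 ^ n) :=
  p *: rho + ((1 - p) / ((4 ^ n)%:R - 1)) *:
     \sum_(P in Qstar n) (pauli P *m rho *m dag (pauli P)).

Definition twirl d K (p : 'I_K -> C) (U : 'I_K -> 'M[C]_d)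
    (Ch : 'M[C]_d -> 'M[C]_d) (rho : 'M[C]_d) : 'M[C]_d :=
  \sum_(i < K) p i *: (dag (U i) *m Ch (U i *m rho *m dag (U i)) *m U i).

Definition rho_k n (k : 'I_(2 ^ n)) : 'M[C]_(2 ^ n) :=
  ((2 ^ n)%:R - 1)^-1 *: \sum_(l < 2 ^ n | l != k) delta_mx l l.

Definition Mchan n (rho : 'M[C]_(2 ^ n)) : 'M[C]_(2 ^ n) :=
  \sum_(k < 2 ^ n) \tr (delta_mx k k *m rho) *: rho_k k.

Definition twirlV n (V : 'I_(2 ^ n).+1 -> 'M[C]_(2 ^ n)) (rho : 'M[C]_(2 ^ n)) :=
  twirl (fun _ => ((2 ^ n).+1%:R)^-1) (fun j => dag (V j)) (@Mchan n) rho.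

Definition good_partition n (S : 'I_(2 ^ n).+1 -> {set 'I_(2 ^ n) * 'I_(2 ^ n)})
    (V : 'I_(2 ^ n).+1 -> 'M[C]_(2 ^ n)) : Prop :=
  [/\ (forall j j', j != j' -> [disjoint S j & S j']),
      \bigcup_j S j = Qstar n,
      (forall j, #|S j| = (2 ^ n - 1)%N),
      (forall j, {in S j &, forall P Q, pauli P *m pauli Q = pauli Q *m pauli P})
    & (forall j, unitary (V j))] /\
  (forall j, 
(forall a, nonzero_idx a -> exists2 P, P \in S j &
          exists s : C, `|s| = 1 /\ V j *m Zop a *m dag (V j) = s *: pauli P) /\
     (forall P, P \in S j -> exists2 a, nonzero_idx a &
          exists s : C, `|s| = 1 /\ V j *m Zop a *m dag (V j) = s *: pauli P)).

End Defs.

(* E_V(M) is the completely depolarizing channel D_0 (p = 0), so the decomposition is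
   D_F = F id + (1 - F) D_0 solved for id; of the hypotheses on C and E only
   E_E(C) = D_F and F != 0 are needed.  Writing d = 2^n, the diagonal part of Y is
   the average of Z_a Y Z_a over a (orthogonality of the characters of (Z/2)^n),
   so d (d - 1) M(Y) = d tr(Y) 1 - sum_a Z_a Y Z_a, and averaging further over the
   X_b shows that the sum of P Y P^dag over all Paulis is d tr(Y) 1.  Conjugation by
   V_j maps {Z_a} onto {1} u S_j up to phases, so the j-th term of E_V(M) is
   proportional to the sum of P rho P^dag over Q_n^* \ S_j; as the S_j partition
   Q_n^*, every P in Q_n^* gets the same total weight. *)

From mathcomp Require Import all_boot all_order all_algebra all_fingroup ring zify.
From Stdlib Require PeanoNat.
Import Order.TTheory GRing.Theory Num.Theory.
Module PN := PeanoNat.Nat.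
Set Implicit Arguments. Unset Strict Implicit.

Lemma expn_NatE m k : m ^ k = PN.pow m k.
Proof. by elim: k => // k IH; rewrite expnS IH PN.pow_succ_r'. Qed.

Lemma divn_NatE k m : (0 < m)%N -> k %/ m = PN.div k m.
Proof.
move=> m_gt0; apply: (PN.div_unique _ _ _ (k %% m)); first by have := ltn_pmod k m_gt0; lia.
by rewrite {1}(divn_eq k m); lia.
Qed.

Lemma odd_NatE k : odd k = PN.odd k.
Proof. by elim/ltn_ind: k => -[|[|k]] IH //; rewrite PN.odd_succ_succ /= negbK IH. Qed.

Lemma bit_testbit k i : bit k i = PN.testbit k i.
Proof.
by rewrite /bit divn_NatE ?expn_gt0 // odd_NatE -PN.bit0_odd expn_NatE PN.div_pow2_bits.
Qed.

Lemma bit0n i : bit 0 i = false.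
Proof. by rewrite bit_testbit PN.bits_0. Qed.

Lemma testbit_ge n a m : (a < 2 ^ n)%N -> (n <= m)%N -> PN.testbit a m = false.
Proof.
move=> a_lt n_le; have [->|a_gt0] := posnP a; first exact: PN.bits_0.
apply: PN.bits_above_log2; apply/ssrnat.ltP; apply: leq_trans n_le; apply/ssrnat.ltP.
by apply/(PN.log2_lt_pow2 _ _ (ssrnat.ltP a_gt0)); rewrite -expn_NatE; apply/ssrnat.ltP.
Qed.

Lemma lxor_ltn n a b : (a < 2 ^ n)%N -> (b < 2 ^ n)%N -> (PN.lxor a b < 2 ^ n)%N.
Proof.
move=> a_lt b_lt; set x := PN.lxor a b.
have [->|x_gt0] := posnP x; first by rewrite expn_gt0.
rewrite expn_NatE; apply/ssrnat.ltP/(PN.log2_lt_pow2 _ _ (ssrnat.ltP x_gt0)).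
have [/ssrnat.ltP //|n_le] := ltnP (PN.log2 x) n.
have x_neq0 : x <> 0%N by move=> x0; rewrite x0 in x_gt0.
have := PN.bit_log2 x x_neq0.
by rewrite {1}/x PN.lxor_spec (testbit_ge a_lt n_le) (testbit_ge b_lt n_le).
Qed.

Section BinaryIndices.
Variable n : nat.
Local Notation I := 'I_(2 ^ n).

Lemma bit_inj (a b : I) : (forall i : 'I_n, bit a i = bit b i) -> a = b.
Proof.
move=> eq_ab; apply/val_inj/PN.bits_inj => m.
have [m_lt|n_le] := ltnP m n; first by have := eq_ab (Ordinal m_lt); rewrite !bit_testbit.
by rewrite (testbit_ge (ltn_ord a) n_le) (testbit_ge (ltn_ord b) n_le).
Qed.

Definition xori (a b : I) : I := Ordinal (lxor_ltn (ltn_ord a) (ltn_ord b)).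

Lemma bit_xori (a b : I) i : bit (xori a b) i = bit a i (+) bit b i.
Proof. by rewrite !bit_testbit PN.lxor_spec; case: PN.testbit; case: PN.testbit. Qed.

Lemma xoriC (a b : I) : xori a b = xori b a.
Proof. exact/val_inj/PN.lxor_comm. Qed.

Lemma xoriK (b : I) : involutive (xori^~ b).
Proof. by move=> a; apply: val_inj; rewrite /= PN.lxor_assoc PN.lxor_nilpotent PN.lxor_0_r. Qed.

Lemma xoriKl (b : I) : involutive (xori b).
Proof. by move=> a; rewrite xoriC [xori b a]xoriC xoriK. Qed.

Definition idx0 : I := Ordinal (expn_gt0 2 n).

Lemma nonzero_idxE (a : I) : nonzero_idx a = (a != idx0).
Proof. by rewrite /nonzero_idx -val_eqE. Qed.

Lemma xori0 (a : I) : xori a idx0 = a.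
Proof. exact/val_inj/PN.lxor_0_r. Qed.

Lemma expn2_ltn (i : 'I_n) : (2 ^ i < 2 ^ n)%N.
Proof. by rewrite ltn_exp2l. Qed.

Definition unit_idx (i : 'I_n) : I := Ordinal (expn2_ltn i).

Lemma bit_unit_idx (i : 'I_n) (l : nat) : bit (unit_idx i) l = (l == i).
Proof.
rewrite bit_testbit /= expn_NatE PN.pow2_bits_eqb.
by case: PN.eqb_spec => [->|ne]; [rewrite eqxx | apply/esym/eqP => /esym].
Qed.

End BinaryIndices.

Local Open Scope ring_scope.

Section MatrixFacts.
Variable C : numClosedFieldType.

Lemma dagM m p q (A : 'M[C]_(m, p)) (B : 'M[C]_(p, q)) : dag (A *m B) = dag B *m dag A.
Proof. by rewrite /dag map_mxM trmx_mul. Qed.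

Lemma dagK m p (A : 'M[C]_(m, p)) : dag (dag A) = A.
Proof. by apply/matrixP => i j; rewrite !mxE conjCK. Qed.

Lemma dagZ m p (c : C) (A : 'M[C]_(m, p)) : dag (c *: A) = c^* *: dag A.
Proof. by apply/matrixP => i j; rewrite !mxE rmorphM. Qed.

Lemma dag1 m : dag (1%:M : 'M[C]_m) = 1%:M.
Proof. by apply/matrixP => i j; rewrite !mxE rmorph_nat eq_sym. Qed.

Lemma dag_perm_mx m (s : {perm 'I_m}) : dag (perm_mx s : 'M[C]_m) = perm_mx s^-1.
Proof. by rewrite -tr_perm_mx; congr _^T; apply/matrixP => i j; rewrite !mxE rmorph_nat. Qed.

Lemma unitary_dagmx m (W : 'M[C]_m) : unitary W -> dag W *m W = 1%:M.
Proof. exact: mulmx1C. Qed.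

Lemma mxtrace_unitary_conj m (W X : 'M[C]_m) : unitary W -> \tr (dag W *m X *m W) = \tr X.
Proof. by move=> W_unitary; rewrite mxtrace_mulC mulmxA W_unitary mul1mx. Qed.

Lemma unitary_conjK m (W X : 'M[C]_m) : unitary W -> dag W *m (W *m X *m dag W) *m W = X.
Proof.
move=> W_unitary.
by rewrite !mulmxA unitary_dagmx // mul1mx -mulmxA unitary_dagmx // mulmx1.
Qed.

Lemma mxtrace_delta_mul m (k : 'I_m) (X : 'M[C]_m) : \tr (delta_mx k k *m X) = X k k.
Proof.
rewrite /mxtrace (bigD1 k) //= big1 ?addr0 => [|l l_neq_k].
  rewrite mxE (bigD1 k) //= big1 ?addr0 => [|l l_neq_k]; first by rewrite mxE !eqxx mul1r.
  by rewrite !mxE eqxx (negbTE l_neq_k) mul0r.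
by rewrite mxE big1 // => j _; rewrite mxE (negbTE l_neq_k) mul0r.
Qed.

Lemma sum_delta_neq m (k : 'I_m) :
  \sum_(l < m | l != k) delta_mx l l = (1%:M : 'M[C]_m) - delta_mx k k.
Proof.
rewrite -diag_const_mx diag_mx_sum_delta [in RHS](bigD1 k) //= mxE scale1r addrC addrK.
by apply: eq_bigr => l _; rewrite mxE scale1r.
Qed.

Lemma phase_conj m (s : C) (A X : 'M[C]_m) :
  `|s| = 1 -> (s *: A) *m X *m dag (s *: A) = A *m X *m dag A.
Proof.
move=> s_unit; rewrite dagZ -scalemxAl -scalemxAl -scalemxAr scalerA -normCK s_unit.
by rewrite expr1n scale1r.
Qed.

End MatrixFacts.

Section PauliTwirl.
Variables (C : numClosedFieldType) (n : nat).
Local Notation d := (2 ^ n)%N.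
Local Notation I := 'I_(2 ^ n).

Definition zsign (a k : I) : C := (-1) ^+ (\sum_(i < n) (bit a i && bit k i)).

Lemma zsign_prod (a k : I) : zsign a k = \prod_(i < n) (-1) ^+ (bit a i && bit k i).
Proof. by rewrite /zsign (big_morph _ (exprD _) (expr0 _)). Qed.

Lemma zsign_xori_unit (a k : I) (i : 'I_n) :
  zsign (xori a (unit_idx i)) k = (-1) ^+ bit k i * zsign a k.
Proof.
rewrite !zsign_prod (bigD1 i) // [in RHS](bigD1 i) // mulrA; congr (_ * _).
  rewrite bit_xori bit_unit_idx eqxx.
  by case: (bit a i); case: (bit k i); rewrite ?mulr1 ?mulN1r ?opprK.
apply: eq_bigr => l l_neq_i.
by rewrite bit_xori bit_unit_idx (negbTE (l_neq_i : (l : nat) != i)) addbF.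
Qed.

(* Orthogonality of the characters a |-> (-1)^(a.k) of (Z/2)^n: for j != k,
   flipping a bit where j and k differ changes the sign of every summand. *)
Lemma sum_zsign_mul (j k : I) : \sum_(a : I) zsign a j * zsign a k = (j == k)%:R * d%:R.
Proof.
have [<-|j_neq_k] := eqVneq j k.
  rewrite mul1r (eq_bigr (fun _ => 1)) ?sumr_const ?card_ord // => a _.
  by rewrite /zsign -exprD addnn -mul2n exprM sqrrN !expr1n.
rewrite mul0r.
have [i bit_neq] : exists i : 'I_n, bit j i != bit k i.
  apply/existsP; apply: contraR j_neq_k => /existsPn bit_eq.
  by apply/eqP/bit_inj => i; apply/eqP/negbNE/bit_eq.
set s := \sum_a _.
have s_opp : s = - s.
  rewrite {1}/s (reindex_inj (can_inj (xoriK (unit_idx i)))) -sumrN.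
  apply: eq_bigr => a _; rewrite !zsign_xori_unit.
  move: bit_neq; case: (bit j i); case: (bit k i) => //= _;
  by rewrite ?mulN1r ?mul1r ?mulrN ?mulNr ?opprK.
have : s *+ 2 == 0 by rewrite mulr2n {1}s_opp addNr.
by rewrite mulrn_eq0 => /eqP.
Qed.

Lemma Zop_diag_mx (a : I) : Zop C a = diag_mx (\row_k zsign a k).
Proof.
by apply/matrixP => i j; rewrite !mxE mulrC; case: eqVneq => [->|]; rewrite ?mulr1 ?mulr0.
Qed.

Lemma dag_Zop (a : I) : dag (Zop C a) = Zop C a.
Proof.
apply/matrixP => i j; rewrite !mxE rmorphM rmorph_nat rmorph_sign eq_sym.
by case: eqVneq => [->|]; rewrite ?mul0r.
Qed.

Lemma Zop_conjE (a : I) (X : 'M[C]_d) i j :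
  (Zop C a *m X *m dag (Zop C a)) i j = zsign a i * X i j * zsign a j.
Proof. by rewrite dag_Zop Zop_diag_mx mul_diag_mx mul_mx_diag !mxE. Qed.

Lemma Zop_twirl (X : 'M[C]_d) :
  \sum_(a : I) Zop C a *m X *m dag (Zop C a) = d%:R *: diag_mx (\row_i X i i).
Proof.
apply/matrixP => i j; rewrite summxE !mxE.
under eq_bigr do rewrite Zop_conjE mulrAC mulrC.
rewrite -mulr_sumr sum_zsign_mul.
by case: eqVneq => [->|]; rewrite ?mul0r ?mulr0 ?mulr0n // mul1r mulr1n mulrC.
Qed.

Lemma XopE (a j k : I) : Xop C a j k = (j == xori k a)%:R.
Proof.
rewrite mxE; congr (nat_of_bool _)%:R.
apply/forallP/eqP => [bit_eq|->]; last by move=> i; rewrite bit_xori.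
by apply: bit_inj => i; rewrite bit_xori; apply/eqP/bit_eq.
Qed.

Definition xori_perm (a : I) : {perm I} := perm (can_inj (xoriK a)).

Lemma Xop_perm_mx (a : I) : Xop C a = perm_mx (xori_perm a).
Proof.
apply/matrixP => j k; rewrite XopE !mxE perm.permE.
by congr (nat_of_bool _)%:R; apply/eqP/eqP => [->|<-]; rewrite xoriK.
Qed.

Lemma Xop_conjE (a : I) (X : 'M[C]_d) i j :
  (Xop C a *m X *m dag (Xop C a)) i j = X (xori i a) (xori j a).
Proof. by rewrite Xop_perm_mx dag_perm_mx -row_permE -col_permE !mxE !perm.permE. Qed.

Lemma Xop_twirl_diag (X : 'M[C]_d) :
  \sum_(a : I) Xop C a *m diag_mx (\row_i X i i) *m dag (Xop C a) = \tr X *: 1%:M.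
Proof.
apply/matrixP => i j; rewrite summxE !mxE.
under eq_bigr => a _ do rewrite Xop_conjE !mxE (can_eq (xoriK a)).
rewrite sumrMnl mulr_natr /mxtrace; congr (_ *+ _).
by rewrite (reindex_inj (can_inj (xoriKl i))); apply: eq_bigr => a _; rewrite xoriKl.
Qed.

Lemma pauli_twirl (X : 'M[C]_d) :
  \sum_(P : I * I) pauli C P *m X *m dag (pauli C P) = d%:R *: (\tr X *: 1%:M).
Proof.
rewrite -Xop_twirl_diag scaler_sumr.
rewrite (eq_bigr (fun P => pauli C (P.1, P.2) *m X *m dag (pauli C (P.1, P.2)))); last by case.
rewrite -(pair_bigA _ (fun x z => pauli C (x, z) *m X *m dag (pauli C (x, z)))).
apply: eq_bigr => x _.
rewrite scalemxAl scalemxAr -Zop_twirl mulmx_sumr mulmx_suml; apply: eq_bigr => z _.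
by rewrite /pauli dagM !mulmxA.
Qed.

Lemma Zop0 : Zop C (idx0 n) = 1%:M.
Proof. by apply/matrixP => j k; rewrite !mxE big1 ?mulr1 // => i _; rewrite bit0n. Qed.

Lemma pauli0 : pauli C (idx0 n, idx0 n) = 1%:M.
Proof.
have Xop0 : Xop C (idx0 n) = 1%:M by apply/matrixP => j k; rewrite XopE xori0 !mxE.
by rewrite /pauli Xop0 Zop0 mulmx1.
Qed.

Lemma Qstar_twirl (X : 'M[C]_d) :
  \sum_(P in Qstar n) pauli C P *m X *m dag (pauli C P) = d%:R *: (\tr X *: 1%:M) - X.
Proof.
rewrite -pauli_twirl [in RHS](bigD1 (idx0 n, idx0 n)) //= pauli0 mul1mx dag1 mulmx1 addrC addrK.
by apply: eq_bigl => -[x z]; rewrite inE !nonzero_idxE xpair_eqE negb_and.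
Qed.

End PauliTwirl.

Section DepolarizingTwirl.
Variables (C : numClosedFieldType) (n : nat).
Local Notation d := (2 ^ n)%N.
Local Notation I := 'I_(2 ^ n).

Lemma Mchan_diag_mx (X : 'M[C]_d) :
  Mchan X = (d%:R - 1)^-1 *: (\tr X *: 1%:M - diag_mx (\row_i X i i)).
Proof.
rewrite /Mchan /rho_k diag_mx_sum_delta {2}/mxtrace scaler_suml -sumrB scaler_sumr.
apply: eq_bigr => k _.
by rewrite mxtrace_delta_mul sum_delta_neq mxE scalerA mulrC -scalerA scalerBr.
Qed.

Lemma dim_neq0 : (d%:R : C) != 0.
Proof. by rewrite pnatr_eq0 -lt0n expn_gt0. Qed.

Lemma Mchan_Zop_twirl (X : 'M[C]_d) :
  Mchan X = (d%:R * (d%:R - 1))^-1 *: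
              (d%:R *: (\tr X *: 1%:M) - \sum_(a : I) Zop C a *m X *m dag (Zop C a)).
Proof.
rewrite Mchan_diag_mx Zop_twirl -scalerBr scalerA invfM mulrAC mulVf ?dim_neq0 //.
by rewrite mul1r.
Qed.

Lemma Zop_unit_idx (a : I) (i : 'I_n) : Zop C a (unit_idx i) (unit_idx i) = (-1) ^+ bit a i.
Proof.
rewrite Zop_diag_mx !mxE eqxx mulr1n zsign_prod (bigD1 i) //= big1 => [|l l_neq_i].
  by rewrite bit_unit_idx eqxx andbT mulr1.
by rewrite bit_unit_idx (negbTE (l_neq_i : (l : nat) != i)) andbF.
Qed.

Lemma Zop_inj : injective (@Zop C n).
Proof.
move=> a b eq_ab; apply: bit_inj => i.
by apply: (@signr_inj C); rewrite -!Zop_unit_idx eq_ab.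
Qed.

Lemma scaled_Zop_inj (s t : C) (a b : I) : s != 0 -> s *: Zop C a = t *: Zop C b -> a = b.
Proof.
move=> s_neq0 eq_st.
have Zop_idx0 c : Zop C c (idx0 n) (idx0 n) = 1.
  by rewrite !mxE eqxx mul1r big1 // => i _; rewrite andbC /= bit0n.
have s_eq_t : s = t.
  by move/matrixP/(_ (idx0 n) (idx0 n)): eq_st; rewrite mxE [in RHS]mxE !Zop_idx0 !mulr1.
by apply: Zop_inj; apply: (scalerI s_neq0); rewrite eq_st s_eq_t.
Qed.

Definition Zop_conj_onto (W : 'M[C]_d) (S : {set I * I}) : Prop :=
  forall a, nonzero_idx a -> exists2 P, P \in S &
    exists s : C, `|s| = 1 /\ W *m Zop C a *m dag W = s *: pauli C P.

(* Up to phases, conjugation by W sends Z_0 = 1 to 1 and the other Z_a injectively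
   into S, hence onto S by counting. *)
Lemma conj_Zop_twirl (W : 'M[C]_d) (S : {set I * I}) (X : 'M[C]_d) :
  unitary W -> #|S| = (d - 1)%N ->
  Zop_conj_onto W S ->
  \sum_(a : I) (W *m Zop C a *m dag W) *m X *m dag (W *m Zop C a *m dag W)
    = X + \sum_(P in S) pauli C P *m X *m dag (pauli C P).
Proof.
move=> W_unitary S_card S_conj.
have [phi phi_spec] : exists phi : I -> I * I, forall a, a != idx0 n ->
    phi a \in S /\ exists s : C, `|s| = 1 /\ W *m Zop C a *m dag W = s *: pauli C (phi a).
  apply: (fin_all_exists (P := fun a P => a != idx0 n -> P \in S /\
    exists s : C, `|s| = 1 /\ W *m Zop C a *m dag W = s *: pauli C P)) => a.
  have [->|a_neq0] := eqVneq a (idx0 n); first by exists (idx0 n, idx0 n).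
  by have [P P_S P_conj] := S_conj a (etrans (nonzero_idxE a) a_neq0); exists P.
rewrite (bigD1 (idx0 n)) //= Zop0 mulmx1 W_unitary dag1 mul1mx mulmx1; congr (_ + _).
set A := [set~ idx0 n].
have phi_inj : {in A &, injective phi}.
  move=> a b; rewrite !inE => /phi_spec[_ [s [s1 s_conj]]] /phi_spec[_ [t [t1 t_conj]]] eq_ab.
  apply: (@scaled_Zop_inj t s); first by rewrite -normr_eq0 t1 oner_eq0.
  by rewrite -(unitary_conjK (Zop C a) W_unitary) -(unitary_conjK (Zop C b) W_unitary)
    s_conj t_conj eq_ab -!scalemxAr -!scalemxAl !scalerA mulrC.
have phi_A : phi @: A = S.
  apply/eqP; rewrite eqEcard card_in_imset // cardsC1 card_ord S_card subn1 leqnn andbT.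
  apply/subsetP => _ /imsetP[a a_A ->].
  by move: a_A; rewrite in_setC1 => /phi_spec[].
rewrite -phi_A big_imset //=; apply: eq_big => [a | a /phi_spec[_ [s [s1 ->]]]].
  by rewrite in_setC1.
exact: phase_conj.
Qed.

Lemma conj_Mchan (W : 'M[C]_d) (S : {set I * I}) (X : 'M[C]_d) :
  unitary W -> #|S| = (d - 1)%N ->
  Zop_conj_onto W S ->
  W *m Mchan (dag W *m X *m W) *m dag W =
    (d%:R * (d%:R - 1))^-1 *: (\sum_(P in Qstar n) pauli C P *m X *m dag (pauli C P)
                               - \sum_(P in S) pauli C P *m X *m dag (pauli C P)).
Proof.
move=> W_unitary S_card S_conj.
rewrite Mchan_Zop_twirl -scalemxAr -scalemxAl mulmxBr mulmxBl; congr (_ *: _).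
rewrite -!scalemxAr -!scalemxAl mulmx1 W_unitary mxtrace_unitary_conj //.
rewrite Qstar_twirl -addrA -opprD -(conj_Zop_twirl X W_unitary S_card S_conj).
congr (_ - _); rewrite mulmx_sumr mulmx_suml; apply: eq_bigr => a _.
by rewrite !dagM dagK !mulmxA.
Qed.

Lemma twirlV_Qstar (V : 'I_d.+1 -> 'M[C]_d) (S : 'I_d.+1 -> {set I * I}) (X : 'M[C]_d) :
  (1 <= n)%N -> good_partition S V ->
  twirlV V X = ((4 ^ n)%:R - 1)^-1 *: \sum_(P in Qstar n) pauli C P *m X *m dag (pauli C P).
Proof.
move=> n_ge1 [[S_disj S_cover S_card _ V_unitary] V_conj].
set Q := \sum_(P in Qstar n) _.
have Q_split : \sum_j \sum_(P in S j) pauli C P *m X *m dag (pauli C P) = Q.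
  by rewrite /Q -S_cover partition_disjoint_bigcup.
rewrite /twirlV /twirl.
under eq_bigr => j _ do rewrite dagK (conj_Mchan X (V_unitary j) (S_card j) (V_conj j).1) scalerA.
rewrite -scaler_sumr sumrB sumr_const card_ord Q_split -/Q mulrSr addrK -scaler_nat scalerA.
congr (_ *: _).
have d_gt1 : (1 < d)%N by rewrite -{1}(expn0 2) ltn_exp2l.
have d1_neq0 : (d%:R - 1 : C) != 0 by rewrite subr_eq0 pnatr_eq1 gtn_eqF.
have d1_neq0' : (d%:R + 1 : C) != 0 by rewrite natr1 pnatr_eq0.
have -> : (4 ^ n = d * d)%N by rewrite -expnMn.
have -> : (d * d)%:R - 1 = (d%:R - 1) * (d%:R + 1) :> C by rewrite natrM; ring.
rewrite -natr1; field.
by rewrite dim_neq0 d1_neq0 d1_neq0'.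
Qed.

End DepolarizingTwirl.

Theorem theorem1 (C : numClosedFieldType) (n : nat) (n_ge1 : (1 <= n)%N)
    (Ch : 'M[C]_(2 ^ n) -> 'M[C]_(2 ^ n)) (Ch_chan : is_channel Ch)
    (F_neq0 : ent_fid Ch != 0)
    (K : nat) (p : 'I_K -> C) (U : 'I_K -> 'M[C]_(2 ^ n))
    (p_ge0 : forall i, 0 <= p i) (p_sum1 : \sum_(i < K) p i = 1)
    (U_unitary : forall i, unitary (U i))
    (twirl_depol : forall rho, twirl p U Ch rho = depol (ent_fid Ch) rho)
    (S : 'I_(2 ^ n).+1 -> {set 'I_(2 ^ n) * 'I_(2 ^ n)})
    (V : 'I_(2 ^ n).+1 -> 'M[C]_(2 ^ n))
    (SV : good_partition S V) :
  forall rho : 'M[C]_(2 ^ n),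
    rho = (ent_fid Ch)^-1 *: twirl p U Ch rho
          - ((ent_fid Ch)^-1 - 1) *: twirlV V rho.
Proof.
move=> rho; rewrite twirl_depol (twirlV_Qstar _ n_ge1 SV) /depol.
set F := ent_fid Ch; set Q := \sum_(P in _) _.
rewrite scalerDr !scalerA mulVf // scale1r mulrA mulrBr mulr1 mulVf //.
by rewrite addrK.
Qed.
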